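(* Let $G$ be a $2$-connected cubic multigraph, let $H$ be a peninsula of $G$ with internal port $p$, and let $C$ be a core of $H$. Then $p\in E(C)$.
   Context: Multigraphs are finite and loopless, parallel edges allowed. A cut of a multigraph $M$ is a bipartition $(U,V(M)\setminus U)$; its cut-set is the set of edges between the sides. A tombolo-cut is a cut whose cut-set (tombolo) has exactly $2$ edges. For a tombolo-cut of $G$ with tombolo $\{a_1b_1,a_2b_2\}$, $a_1,a_2\in U$, the pairs $\{a_1,a_2\}$, $\{b_1,b_2\}$ are its port-pairs. A virtual subgraph of $G$ (on vertex set $X\subseteq V(G)$) is the multigraph on $X$ whose edges are all edges of $G$ with both ends in $X$ (real edges) plus one (possibly parallel) virtual edge $ab$ for every port-pair $\{a,b\}\subseteq X$ of a tombolo of $G$ both of whose edges are not edges of $G$ inside $X$. A peninsula is a virtual subgraph $H$ such that $(V(H),V(G)\setminus V(H))$ is a tombolo-cut, or $H=G$. The internal port of a peninsula $H\ne G$ is its unique virtual edge; if $H=G$ an arbitrary edge is fixed as internal port. A core of a peninsula $H$ with internal port $p=xy$ is obtained as follows: set $C_1=H$; while $C_i$ has a cut $(U,V(C_i)\setminus U)$ whose cut-set (in $C_i$) has exactly $2$ edges, neither of which is $p$, let $C_{i+1}$ be the virtual subgraph of $G$ on $U$ if $\{x,y\}\subseteq U$, and on $V(C_i)\setminus U$ otherwise; when no such cut exists, the current $C_i$ is a core. *)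

From mathcomp Require Import all_boot.
Set Implicit Arguments. Unset Strict Implicit. Unset Printing Implicit Defensive.

(* A finite loopless multigraph G is given by a vertex finType V, an edge
   finType E and endpoint maps src tgt : E -> V (with src e != tgt e).
   Parallel edges = distinct elements of E with the same endpoints. *)

Section Multigraph.
Variables (V E : finType) (src tgt : E -> V).

Definition ends (e : E) : {set V} := [set src e; tgt e].

Definition loopless : Prop := forall e, src e != tgt e.

(* degree of v (no loops, so each incident edge counts once) *)
Definition deg (v : V) : nat :=
  #|[set e | src e == v]| + #|[set e | tgt e == v]|.

Definition cubic : Prop := forall v, deg v = 3.

Definition adj_in (S : {set V}) : rel V := fun x y =>
  [&& x \in S, y \in S &
      [exists e, ((src e == x) && (tgt e == y)) || ((src e == y) && (tgt e == x))]].

Definition connected_in (S : {set V}) : Prop :=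
  {in S &, forall x y, connect (adj_in S) x y}.

Definition two_connected : Prop :=
  2 < #|V| /\ connected_in setT /\ forall v, connected_in (~: [set v]).

Definition cutset (U : {set V}) : {set E} :=
  [set e | (src e \in U) != (tgt e \in U)].

Definition tombolo_cut (U : {set V}) : bool := #|cutset U| == 2.

Definition port_pair (T : {set E}) (P : {set V}) : bool :=
  [exists U : {set V},
    [&& tombolo_cut U, cutset U == T & P == U :&: \bigcup_(e in T) ends e]].

(* Global universe of (possibly virtual) edges: a real edge of G, or the
   virtual edge indexed by a (tombolo, port-pair) pair. *)
Definition vedge : finType := (E + ({set E} * {set V}))%type.

Definition vends (f : vedge) : {set V} :=
  match f with inl e => ends e | inr tp => tp.2 end.

Definition is_virtual (f : vedge) : bool :=
  if f is inr _ then true else false.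

Definition vsub (X : {set V}) : {set vedge} :=
  [set f : vedge | match f with
    | inl e => ends e \subset X
    | inr tp => [&& port_pair tp.1 tp.2, tp.2 \subset X &
                    [forall e in tp.1, ~~ (ends e \subset X)]]
    end].

Definition peninsula (X : {set V}) : bool := (X == setT) || tombolo_cut X.

(* p is an internal port of the peninsula on X: its unique virtual edge if
   X <> V(G), an (arbitrary) edge of G if X = V(G). *)
Definition internal_port (X : {set V}) (p : vedge) : bool :=
  if X == setT then p \in vsub X
  else [set f in vsub X | is_virtual f] == [set p].

Definition vcutset (X U : {set V}) : {set vedge} :=
  [set f in vsub X | (vends f :&: U != set0) && (vends f :&: (X :\: U) != set0)].

Definition reducing_cut (p : vedge) (X U : {set V}) : bool :=
  [&& U \subset X, #|vcutset X U| == 2 & p \notin vcutset X U].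

Definition core_step (p : vedge) (X X' : {set V}) : Prop :=
  exists U, reducing_cut p X U /\
            X' = (if vends p \subset U then U else X :\: U).

Inductive core_reach (p : vedge) : {set V} -> {set V} -> Prop :=
  | core_refl X : core_reach p X X
  | core_next X Y Z : core_step p X Y -> core_reach p Y Z -> core_reach p X Z.

Definition is_core (X : {set V}) (p : vedge) (Y : {set V}) : Prop :=
  core_reach p X Y /\ ~ (exists U, reducing_cut p Y U).

End Multigraph.

From Pilot Require Import Defs.
From mathcomp Require Import all_boot.
Set Implicit Arguments. Unset Strict Implicit. Unset Printing Implicit Defensive.

(* The internal port p is an edge of the virtual subgraph of the peninsula.
   A reducing cut avoids p, so both ends of p lie on the same side; the core
   step keeps the side containing the ends of p, and membership of p in a
   virtual subgraph only requires its ends to lie in the vertex set (the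
   tombolo of a virtual edge, not inside the larger set, is not inside the
   smaller one either).  Hence p survives every step. *)

Section InternalPortInCore.
Variables (V E : finType) (src tgt : E -> V).

Local Notation vsub := (vsub src tgt).
Local Notation vends := (vends src tgt).
Local Notation vcutset := (vcutset src tgt).

Lemma vends_vsub (X : {set V}) (f : vedge V E) :
  f \in vsub X -> vends f \subset X.
Proof. by rewrite inE; case: f => [e|[T P]] //= /and3P[]. Qed.

Lemma vsub_subset (X X' : {set V}) (f : vedge V E) :
  X' \subset X -> vends f \subset X' -> f \in vsub X -> f \in vsub X'.
Proof.
move=> sX'X; rewrite !inE; case: f => [e|[T P]] //= sPX'.
case/and3P=> portP _ /forall_inP outT; rewrite portP sPX' /=.
apply/forall_inP=> e eT; apply: contra (outT e eT) => sX'e.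
exact: subset_trans sX'e sX'X.
Qed.

Lemma vends_side (X U : {set V}) (f : vedge V E) :
  f \in vsub X -> f \notin vcutset X U ->
  (vends f \subset U) || (vends f \subset X :\: U).
Proof.
move=> fX; have sfX := vends_vsub fX.
rewrite /Defs.vcutset inE fX /= negb_and !negbK => /orP[fU0 | fXU0].
  by rewrite subsetD sfX -setI_eq0 fU0 orbT.
apply/orP; left; apply/subsetP=> x xf; apply/negPn/negP=> xU.
have : x \in vends f :&: (X :\: U) by rewrite !inE xf xU (subsetP sfX).
by rewrite (eqP fXU0) inE.
Qed.

Lemma core_step_vsub (p : vedge V E) (X X' : {set V}) :
  core_step src tgt p X X' -> p \in vsub X -> p \in vsub X'.
Proof.
case=> U [/and3P[sUX _ pU] ->] pX.
have [spU | nspU] := boolP (vends p \subset U).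
  exact: vsub_subset sUX spU pX.
have spXU : vends p \subset X :\: U.
  by have := vends_side pX pU; rewrite (negbTE nspU).
exact: vsub_subset (subsetDl X U) spXU pX.
Qed.

Lemma core_reach_vsub (p : vedge V E) (X Y : {set V}) :
  core_reach src tgt p X Y -> p \in vsub X -> p \in vsub Y.
Proof. by elim=> // {}X X' Z /core_step_vsub stepX _ IH /stepX. Qed.

Lemma internal_port_vsub (X : {set V}) (p : vedge V E) :
  internal_port src tgt X p -> p \in vsub X.
Proof.
rewrite /internal_port; case: ifP => // _ /eqP virtX.
by have := set11 p; rewrite -virtX inE => /andP[].
Qed.

End InternalPortInCore.

Theorem lemma16 (V E : finType) (src tgt : E -> V)
  (Hloop : loopless src tgt) (Hcubic : cubic src tgt)
  (H2c : two_connected src tgt)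
  (X : {set V}) (p : vedge V E)
  (Hpen : peninsula src tgt X) (Hport : internal_port src tgt X p)
  (Y : {set V}) (Hcore : is_core src tgt X p Y) :
  p \in vsub src tgt Y.
Proof.
case: Hcore => reachY _.
exact: core_reach_vsub reachY (internal_port_vsub Hport).
Qed.
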